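(* Let $K$ be a CM field of degree $2g$ with maximal totally real subfield $F$, and let $\mathcal{O}\subseteq K$ be an order with $\mathcal{O}\cap F=\mathcal{O}_F$. Let $\{\alpha_1,\dots,\alpha_g\}$, $\{\tau_1,\dots,\tau_{2g}\}$, $\{\omega_1,\dots,\omega_{2g}\}$ be $\mathbb{Z}$-bases of $\mathcal{O}_F$, $\mathcal{O}$, $\mathcal{O}_K$ respectively. Define $b_{i,j,k}\in\mathbb{Q}$ by $\alpha_i\omega_j=\sum_{k=1}^{2g}b_{i,j,k}\tau_k$, let $M_j$ be the $2g\times g$ matrix whose $(k,i)$ entry is $b_{i,j,k}$, and let $M$ be the $(2g)^2\times g$ matrix obtained by stacking $M_1,\dots,M_{2g}$ vertically. Let $d$ be the greatest common divisor of all integers $d'$ such that $d'M$ has integer entries, and let $H\in\mathbb{Z}^{g\times g}$ be the row Hermite normal form of $dM$ (with its zero rows removed). Then $H$ is invertible, and the ideal $\mathfrak{f}^+=\mathfrak{f}\cap\mathcal{O}_F$, where $\mathfrak{f}=\{\alpha\in K:\alpha\mathcal{O}_K\subseteq\mathcal{O}\}$ is the conductor ideal of $\mathcal{O}$, equals $\mathbb{Z}\beta_1+\dots+\mathbb{Z}\beta_g$, where $(\beta_1,\dots,\beta_g)=(\alpha_1,\dots,\alpha_g)\,dH^{-1}$. In other words, the algorithm that computes $b_{i,j,k}$, $M$, $d$, $H$ and outputs this $\mathbb{Z}$-basis correctly computes $\mathfrak{f}^+$.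
   Context: A CM field is a totally imaginary quadratic extension of a totally real number field; $F$ denotes that totally real subfield. The row Hermite normal form of an integer matrix $N$ is the (unique) Hermite normal form of the lattice spanned by the rows, obtained as $UN$ for a unimodular integer matrix $U$. The ideal $\mathfrak{f}\cap\mathcal{O}_F$ uniquely identifies orders of $K$ containing $\mathcal{O}_F$. *)

From HB Require Import structures.
From mathcomp Require Import all_boot all_order all_algebra all_field.
Set Implicit Arguments. Unset Strict Implicit. Unset Printing Implicit Defensive.
Import Order.TTheory GRing.Theory Num.Theory.
Local Open Scope ring_scope.

Section Defs.
Variable L : fieldExtType rat.

Definition integral (x : L) : Prop :=
  exists p : {poly int}, p \is monic /\ root (map_poly (fun z : int => z%:~R : L) p) x.

Definition zspan (n : nat) (v : 'I_n -> L) (x : L) : Prop :=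
  exists c : 'I_n -> int, x = \sum_(i < n) ((c i)%:~R : rat) *: v i.

Definition zfree (n : nat) (v : 'I_n -> L) : Prop :=
  forall c : 'I_n -> int, \sum_(i < n) ((c i)%:~R : rat) *: v i = 0 -> forall i, c i = 0.

Definition zbasis (n : nat) (v : 'I_n -> L) (S : L -> Prop) : Prop :=
  (forall x, S x <-> zspan v x) /\ zfree v.

Definition is_order (O : L -> Prop) : Prop :=
  [/\ O 1, (forall x y, O x -> O y -> O (x - y)),
      (forall x y, O x -> O y -> O (x * y)) &
      exists v : 'I_(\dim {:L}) -> L, zbasis v O].

Definition conductor (O : L -> Prop) (a : L) : Prop :=
  forall y, integral y -> O (a * y).

Definition totally_real (F : {subfield L}) : Prop :=
  forall s : {rmorphism subvs_of F -> algC}, forall x, s x \is Num.real.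

Definition totally_imaginary : Prop :=
  forall s : {rmorphism L -> algC}, exists x, s x \isn't Num.real.

Definition is_CM_with_real_subfield (F : {subfield L}) : Prop :=
  [/\ totally_real F, (\dim {:L} = 2 * \dim F)%N & totally_imaginary].
End Defs.

Definition is_rowHNF (m n : nat) (A : 'M[int]_(m, n)) : Prop :=
  exists (r : nat) (p : 'I_m -> 'I_n),
   [/\ (forall i : 'I_m, (r <= i)%N -> forall j, A i j = 0),
       (forall i : 'I_m, (i < r)%N -> 0 < A i (p i) /\
                                     forall j : 'I_n, (j < p i)%N -> A i j = 0),
       (forall i k : 'I_m, (i < k)%N -> (k < r)%N -> (p i < p k)%N) &
       (forall i k : 'I_m, (k < i)%N -> (i < r)%N -> 0 <= A k (p i) < A i (p i))].

Definition is_gcd_of (S : int -> Prop) (d : int) : Prop :=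
  [/\ 0 <= d, (forall x, S x -> (d %| x)%Z) &
      forall e, (forall x, S x -> (e %| x)%Z) -> (e %| d)%Z].

Definition int_mx (m n : nat) (A : 'M[rat]_(m, n)) : Prop :=
  exists N : 'M[int]_(m, n), A = map_mx (fun z : int => z%:~R) N.

Lemma stack_div_lt n (r : 'I_(n * n)) : (r %/ n < n)%N.
Proof.
case: n r => [|n] r; first by case: r.
by rewrite ltn_divLR // ltn_ord.
Qed.

Lemma stack_mod_lt n (r : 'I_(n * n)) : (r %% n < n)%N.
Proof. case: n r => [|n] r; first by case: r. by rewrite ltn_pmod. Qed.

(* vertical stacking of M_0, ..., M_(n-1), each M_j : n x g with (k,i) entry b i j k *)
Definition stackM (g n : nat) (b : 'I_g -> 'I_n -> 'I_n -> rat) : 'M[rat]_(n * n, g) :=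
  \matrix_(r < n * n, i < g)
     b i (Ordinal (stack_div_lt r)) (Ordinal (stack_mod_lt r)).

Lemma le_g_sq g : (g <= (2 * g) * (2 * g))%N.
Proof. by case: g => // g; rewrite -[X in (X <= _)%N]muln1 leq_mul // ?leq_pmull // muln_gt0. Qed.

Definition topblock (g : nat) (A : 'M[int]_((2 * g) * (2 * g), g)) : 'M[int]_g :=
  \matrix_(i < g, j < g) A (widen_ord (le_g_sq g) i) j.

(* Write x = sum_i c_i alpha_i with c in Q^g. The tau-coordinates of the
   products x omega_j are the entries of M c, so x lies in the conductor iff
   M c is integral; the conductor is contained in O (multiply by 1), so such
   an x in F automatically lies in O_F. As d M = N and U N = [H; 0] with U
   unimodular, M c is integral iff H c lies in d Z^g, i.e. c lies in
   d H^-1 Z^g. M is injective because 1 lies in O_K and the alpha_i are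
   linearly independent, which makes H invertible; the rows of the Hermite
   form below the g-th vanish because its pivot columns strictly increase. *)

From HB Require Import structures.
From mathcomp Require Import all_boot all_order all_algebra all_field.
From mathcomp Require Import zify.
Import Order.TTheory GRing.Theory Num.Theory.
Set Implicit Arguments.
Unset Strict Implicit.
Unset Printing Implicit Defensive.
Local Open Scope ring_scope.

Local Notation ratmx := (map_mx (fun z : int => z%:~R : rat)).

Lemma rowHNF_rows_ge_zero m n (A : 'M[int]_(m, n)) : is_rowHNF A ->
  forall i : 'I_m, (n <= i)%N -> forall j, A i j = 0.
Proof.
case=> r [p [low_zero _ pivot_incr _]] i le_n_i j.
apply: low_zero; rewrite leqNgt; apply/negP => lt_i_r.
have pivot_ge k (lt_k_m : (k < m)%N) : (k < r)%N -> (k <= p (Ordinal lt_k_m))%N.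
  elim: k lt_k_m => [//|k IHk] lt_k_m lt_k_r.
  have lt_k_m' := ltnW lt_k_m.
  have := pivot_incr (Ordinal lt_k_m') (Ordinal lt_k_m) (ltnSn k) lt_k_r.
  have := IHk lt_k_m' (ltnW lt_k_r); lia.
have := pivot_ge i (ltn_ord i) lt_i_r; have := ltn_ord (p (Ordinal (ltn_ord i))).
lia.
Qed.

Lemma is_gcd_of_neq0 (S : int -> Prop) d x : is_gcd_of S d -> S x -> x != 0 -> d != 0.
Proof. by case=> _ dvd_d _ /dvd_d d_dvd_x; apply: contraNneq => d0; rewrite -dvd0z -d0. Qed.

Lemma int_mxP m n (A : 'M[rat]_(m, n)) :
  int_mx A <-> forall i j, A i j \is a Num.int.
Proof.
split=> [[N ->] i j|A_int]; first by rewrite mxE intr_int.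
exists (\matrix_(i, j) numq (A i j)); apply/matrixP => i j.
by rewrite !mxE; have /intrP[z ->] := A_int i j; rewrite numq_int.
Qed.

Lemma int_mx_scale_denom m n (A : 'M[rat]_(m, n)) :
  exists2 D : int, D != 0 & int_mx (D%:~R *: A).
Proof.
exists (\prod_(ij : 'I_m * 'I_n) denq (A ij.1 ij.2)).
  by apply/prodf_neq0 => ij _; exact: denq_neq0.
apply/int_mxP => i j; rewrite mxE (bigD1 (i, j)) //= rmorphM /= mulrAC.
by rewrite [_ * A i j]mulrC -numqE rpredM ?intr_int.
Qed.

Lemma int_mx_mull m n p (W : 'M[int]_(m, n)) (B : 'M[rat]_(n, p)) :
  int_mx B -> int_mx (ratmx W *m B).
Proof. by case=> Z ->; exists (W *m Z); rewrite map_mxM. Qed.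

Lemma ratmx_mulVmx n (U : 'M[int]_n) : U \in unitmx -> ratmx (invmx U) *m ratmx U = 1%:M.
Proof. by move=> U_unit; rewrite -map_mxM mulVmx // map_mx1. Qed.

Lemma int_mx_unimodular m p (U : 'M[int]_m) (B : 'M[rat]_(m, p)) :
  U \in unitmx -> int_mx (ratmx U *m B) <-> int_mx B.
Proof.
move=> U_unit; split=> [/(int_mx_mull (invmx U))|]; last exact: int_mx_mull.
by rewrite mulmxA ratmx_mulVmx // mul1mx.
Qed.

Lemma int_mx_pid m n p (le_nm : (n <= m)%N) (B : 'M[rat]_(n, p)) :
  int_mx (ratmx (pid_mx n : 'M[int]_(m, n)) *m B) <-> int_mx B.
Proof.
split=> [/(int_mx_mull (pid_mx n : 'M[int]_(n, m)))|]; last exact: int_mx_mull.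
have min_mn : minn m n = n by apply/minn_idPr.
by rewrite mulmxA -map_mxM mul_pid_mx !minnn min_mn pid_mx_1 map_mx1 mul1mx.
Qed.

Lemma rowsub_widen_pid (R : pzRingType) m n p (le_nm : (n <= m)%N) (A : 'M[R]_(m, p)) :
  rowsub (widen_ord le_nm) A = pid_mx n *m A.
Proof. by rewrite rowsubE -pid_mxErow. Qed.

Lemma pid_mul_rowsub_widen (R : pzRingType) m n p (le_nm : (n <= m)%N) (A : 'M[R]_(m, p)) :
  (forall i : 'I_m, (n <= i)%N -> forall j, A i j = 0) ->
  pid_mx n *m rowsub (widen_ord le_nm) A = A.
Proof.
move=> A_low; rewrite rowsub_widen_pid mulmxA mul_pid_mx !minnn.
apply/matrixP => i j; rewrite !mxE (bigD1 i) //= big1 => [|k]; last first.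
  by rewrite !mxE eq_sym val_eqE => /negbTE->; rewrite mul0r.
rewrite !mxE eqxx /= addr0; case: ltnP => [_|/A_low->]; first by rewrite mul1r.
by rewrite mul0r.
Qed.

Lemma unitmx_ker0 (F : fieldType) n (A : 'M[F]_n) :
  (forall v : 'cV_n, A *m v = 0 -> v = 0) -> A \in unitmx.
Proof.
move=> A_inj; rewrite unitmxE unitfE -det_tr; apply/negP => /det0P[v v_neq0 vA0].
have Av0 : A *m v^T = 0 by rewrite -[A]trmxK -trmx_mul vA0 trmx0.
by move: v_neq0; rewrite -[v]trmxK (A_inj _ Av0) trmx0 eqxx.
Qed.

Section HermiteLattice.
Variables (m n : nat) (le_nm : (n <= m)%N) (A : 'M[rat]_(m, n)) (d : int).
Variables (N : 'M[int]_(m, n)) (U : 'M[int]_m) (Hf : 'M[int]_(m, n)).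
Hypotheses (d_neq0 : d != 0) (NE : ratmx N = d%:~R *: A) (U_unit : U \in unitmx).
Hypotheses (HfE : U *m N = Hf) (Hf_low : forall i : 'I_m, (n <= i)%N -> forall j, Hf i j = 0).

Let H := rowsub (widen_ord le_nm) Hf.

Lemma unimodular_mul_hnf p (c : 'M[rat]_(n, p)) :
  ratmx U *m (A *m c) = ratmx (pid_mx n : 'M_(m, n)) *m (d%:~R^-1 *: (ratmx H *m c)).
Proof.
rewrite -scalemxAr [in RHS]mulmxA -map_mxM pid_mul_rowsub_widen // -HfE map_mxM NE.
by rewrite -scalemxAr -scalemxAl scalerA mulVf ?intr_eq0 // scale1r mulmxA.
Qed.

Lemma hnf_block_unit : (forall c : 'cV_n, A *m c = 0 -> c = 0) -> ratmx H \in unitmx.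
Proof.
move=> A_inj; apply: unitmx_ker0 => v Hv0; apply: A_inj.
have := unimodular_mul_hnf v; rewrite Hv0 scaler0 !mulmx0.
by move/(congr1 (mulmx (ratmx (invmx U)))); rewrite mulmxA ratmx_mulVmx // mul1mx mulmx0.
Qed.

Lemma hnf_lattice p (c : 'M[rat]_(n, p)) : ratmx H \in unitmx ->
  int_mx (A *m c) <-> exists e : 'M[int]_(n, p), c = d%:~R *: (invmx (ratmx H) *m ratmx e).
Proof.
move=> H_unit; have dQ_neq0 : d%:~R != 0 :> rat by rewrite intr_eq0.
rewrite -(int_mx_unimodular _ U_unit) unimodular_mul_hnf int_mx_pid //.
split=> [[e eE]|[e ->]]; exists e.
  have : ratmx H *m c = d%:~R *: ratmx e by rewrite -eE scalerA divff // scale1r.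
  by move/(congr1 (mulmx (invmx (ratmx H)))); rewrite mulKmx // => ->; rewrite scalemxAr.
by rewrite -scalemxAr mulKVmx // scalerA mulVf // scale1r.
Qed.

End HermiteLattice.

Section ZLattices.
Variable L : fieldExtType rat.

Lemma integral1 : integral (1 : L).
Proof.
exists ('X - 1%:P); split; first by rewrite monicXsubC.
by rewrite rmorphB /= map_polyX map_polyC /= rmorph1 root_XsubC.
Qed.

Lemma zspan_gen n (v : 'I_n -> L) j : zspan v (v j).
Proof.
exists (fun i => (i == j)%:R); rewrite (bigD1 j) //= eqxx scale1r big1 ?addr0 //.
by move=> i /negbTE ->; rewrite scale0r.
Qed.

Lemma zspan_zcomb n a (v : 'I_n -> L) (w : 'I_a -> L) (f : 'I_a -> int) :
  (forall j, zspan v (w j)) -> zspan v (\sum_j (f j)%:~R *: w j).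
Proof.
move=> /fin_all_exists[c wE]; exists (fun k => \sum_j f j * c j k).
under eq_bigr do rewrite wE scaler_sumr.
rewrite exchange_big /=; apply: eq_bigr => k _.
rewrite rmorph_sum scaler_suml; apply: eq_bigr => j _.
by rewrite scalerA rmorphM.
Qed.

Lemma zfree_qfree n (v : 'I_n -> L) : zfree v ->
  forall c : 'I_n -> rat, \sum_i c i *: v i = 0 -> forall i, c i = 0.
Proof.
move=> v_free c cv0.
have [D D_neq0 /int_mxP Dc_int] := int_mx_scale_denom (\row_i c i).
have /fin_all_exists[z zE] : forall i, exists z : int, D%:~R * c i = z%:~R.
  by move=> i; apply/intrP; have := Dc_int 0 i; rewrite !mxE.
have z0 : forall i, z i = 0.
  apply: v_free; under eq_bigr do rewrite -zE -scalerA.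
  by rewrite -scaler_sumr cv0 scaler0.
move=> i; have /eqP := zE i.
by rewrite z0 mulr0z mulf_eq0 intr_eq0 (negbTE D_neq0) => /eqP.
Qed.

Lemma zbasis_coordP n (v : 'I_n -> L) S : zbasis v S ->
  forall q : 'I_n -> rat, S (\sum_k q k *: v k) <-> forall k, q k \is a Num.int.
Proof.
case=> S_span v_free q; rewrite S_span; split=> [[t tE] k|q_int].
  have qt0 : \sum_k (q k - (t k)%:~R) *: v k = 0.
    by under eq_bigr do rewrite scalerBl; rewrite sumrB tE subrr.
  by have /eqP := zfree_qfree v_free qt0 k; rewrite subr_eq0 => /eqP ->; exact: intr_int.
have /fin_all_exists[t tE] : forall k, exists t : int, q k = t%:~R.
  by move=> k; apply/intrP.
by exists t; apply: eq_bigr => k _; rewrite tE.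
Qed.

Lemma conductor_basisP (O : L -> Prop) a n (omega : 'I_a -> L) (tau : 'I_n -> L) x :
  (forall y, integral y <-> zspan omega y) -> (forall y, O y <-> zspan tau y) ->
  conductor O x <-> forall j, O (x * omega j).
Proof.
move=> int_span O_span; split=> [x_cond j|x_omega y /int_span[f ->]].
  by apply/x_cond/int_span/zspan_gen.
rewrite mulr_sumr; apply/O_span.
under eq_bigr do rewrite -scalerAr.
by apply: zspan_zcomb => j; apply/O_span.
Qed.

End ZLattices.

Lemma stack_idx_lt n (j k : 'I_n) : (j * n + k < n * n)%N.
Proof. have := ltn_ord j; have := ltn_ord k; nia. Qed.

Definition stack_idx n (j k : 'I_n) : 'I_(n * n) := Ordinal (stack_idx_lt j k).

Lemma stack_idxP n (r : 'I_(n * n)) :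
  r = stack_idx (Ordinal (stack_div_lt r)) (Ordinal (stack_mod_lt r)).
Proof. by apply: val_inj; rewrite /= -divn_eq. Qed.

Section ConductorCoordinates.
Variables (L : fieldExtType rat) (g n : nat) (O : L -> Prop).
Variables (alpha : 'I_g -> L) (tau omega : 'I_n -> L).
Variable b : 'I_g -> 'I_n -> 'I_n -> rat.
Hypotheses (tau_basis : zbasis tau O) (omega_basis : zbasis omega (@integral L)).
Hypothesis alpha_omegaE : forall i j, alpha i * omega j = \sum_k b i j k *: tau k.

Definition alpha_comb (c : 'cV[rat]_g) : L := \sum_i c i 0 *: alpha i.

Lemma stackM_mul_idx (c : 'cV[rat]_g) j k :
  (stackM b *m c) (stack_idx j k) 0 = \sum_i b i j k * c i 0.
Proof.
have n_gt0 : (0 < n)%N by apply: leq_ltn_trans (ltn_ord j).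
rewrite !mxE; apply: eq_bigr => i _; rewrite mxE; congr (b i _ _ * _); apply: val_inj => /=.
  by rewrite divnMDl // divn_small // addn0.
by rewrite modnMDl modn_small.
Qed.

Lemma alpha_comb_mul_omega c j :
  alpha_comb c * omega j = \sum_k (stackM b *m c) (stack_idx j k) 0 *: tau k.
Proof.
rewrite mulr_suml; under eq_bigr do rewrite -scalerAl alpha_omegaE scaler_sumr.
rewrite exchange_big /=; apply: eq_bigr => k _.
rewrite stackM_mul_idx scaler_suml; apply: eq_bigr => i _.
by rewrite scalerA mulrC.
Qed.

Lemma conductor_alpha_combP c : conductor O (alpha_comb c) <-> int_mx (stackM b *m c).
Proof.
rewrite (conductor_basisP _ omega_basis.1 tau_basis.1) int_mxP.
split=> [x_cond r k|Mc_int j]; last first.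
  by rewrite alpha_comb_mul_omega (zbasis_coordP tau_basis) => k.
rewrite (ord1 k) [r]stack_idxP.
by have := x_cond (Ordinal (stack_div_lt r)); rewrite alpha_comb_mul_omega zbasis_coordP.
Qed.

Lemma stackM_inj : zfree alpha -> forall c : 'cV_g, stackM b *m c = 0 -> c = 0.
Proof.
move=> alpha_free c Mc0.
have [one oneE] := (omega_basis.1 1).1 (integral1 L).
have c_comb0 : alpha_comb c = 0.
  rewrite -[alpha_comb c]mulr1 oneE mulr_sumr big1 // => j _.
  rewrite -scalerAr alpha_comb_mul_omega big1 ?scaler0 // => k _.
  by rewrite Mc0 mxE scale0r.
apply/matrixP => i k; rewrite (ord1 k) mxE.
exact: zfree_qfree alpha_free _ c_comb0 i.
Qed.

Lemma conductor_real_alpha_combP (F : {subfield L}) :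
  zbasis alpha (fun x => x \in F /\ integral x) ->
  (forall x, (O x /\ x \in F) <-> (x \in F /\ integral x)) ->
  forall x, conductor O x /\ (x \in F /\ integral x) <->
            exists c, x = alpha_comb c /\ int_mx (stackM b *m c).
Proof.
move=> [alpha_span _] OF x; split=> [[x_cond /alpha_span[e xE]]|[c [-> Mc_int]]].
  have x_comb : x = alpha_comb (\col_i (e i)%:~R).
    by rewrite xE; apply: eq_bigr => i _; rewrite mxE.
  by exists (\col_i (e i)%:~R); rewrite -conductor_alpha_combP -x_comb.
have x_cond := (conductor_alpha_combP c).2 Mc_int.
have x_F : alpha_comb c \in F.
  apply: memv_suml => i _; apply: memvZ.
  by have [] := (alpha_span (alpha i)).2 (zspan_gen alpha i).
have x_O : O (alpha_comb c) by rewrite -[alpha_comb c]mulr1; exact/x_cond/integral1.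
by split=> //; exact: (OF _).1 (conj x_O x_F).
Qed.

Lemma zspan_alpha_comb (Q : 'M[rat]_g) (d : rat) x :
  zspan (fun j => \sum_i (d * Q i j) *: alpha i) x <->
  exists e : 'cV[int]_g, x = alpha_comb (d *: (Q *m ratmx e)).
Proof.
have combE (e : 'cV[int]_g) :
    \sum_j (e j 0)%:~R *: (\sum_i (d * Q i j) *: alpha i) =
    alpha_comb (d *: (Q *m ratmx e)).
  under eq_bigr do rewrite scaler_sumr.
  rewrite exchange_big /=; apply: eq_bigr => i _.
  rewrite !mxE mulr_sumr scaler_suml; apply: eq_bigr => j _.
  by rewrite scalerA !mxE mulrCA [Q i j * _]mulrC.
split=> [[f ->]|[e ->]]; last by exists (fun j => e j 0); rewrite combE.
by exists (\col_j f j); rewrite -combE; apply: eq_bigr => j _; rewrite mxE.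
Qed.

End ConductorCoordinates.

Theorem mainTheorem1
  (L : fieldExtType rat) (g : nat) (F : {subfield L})
  (hdeg : \dim {:L} = (2 * g)%N)
  (hCM : is_CM_with_real_subfield F)
  (O : L -> Prop) (hO : is_order O)
  (hOF : forall x : L, (O x /\ x \in F) <-> (x \in F /\ integral x))
  (alpha : 'I_g -> L) (halpha : zbasis alpha (fun x => x \in F /\ integral x))
  (tau : 'I_(2 * g) -> L) (htau : zbasis tau O)
  (omega : 'I_(2 * g) -> L) (homega : zbasis omega (@integral L))
  (b : 'I_g -> 'I_(2 * g) -> 'I_(2 * g) -> rat)
  (hb : forall i j, alpha i * omega j = \sum_(k < 2 * g) b i j k *: tau k)
  (d : int)
  (hd : is_gcd_of (fun d' : int => int_mx (d'%:~R *: stackM b)) d)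
  (N : 'M[int]_((2 * g) * (2 * g), g))
  (hN : map_mx (fun z : int => z%:~R) N = d%:~R *: stackM b)
  (U : 'M[int]_((2 * g) * (2 * g))) (hU : U \in unitmx)
  (Hfull : 'M[int]_((2 * g) * (2 * g), g))
  (hH : U *m N = Hfull) (hHNF : is_rowHNF Hfull) :
  let H := topblock Hfull in
  let Hinv := invmx (map_mx (fun z : int => z%:~R : rat) H) in
  let beta := fun j : 'I_g => \sum_(i < g) (d%:~R * Hinv i j) *: alpha i in
  [/\ (forall r : 'I_((2 * g) * (2 * g)), (g <= r)%N -> forall j, Hfull r j = 0),
      map_mx (fun z : int => z%:~R : rat) H \in unitmx &
      forall x : L, (conductor O x /\ (x \in F /\ integral x)) <-> zspan beta x].
Proof.
move=> H Hinv beta.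
have Hf_low := rowHNF_rows_ge_zero hHNF.
have d_neq0 : d != 0.
  have [D D_neq0 DM_int] := int_mx_scale_denom (stackM b).
  exact: is_gcd_of_neq0 hd DM_int D_neq0.
have H_unit : ratmx H \in unitmx.
  exact: hnf_block_unit d_neq0 hN hU hH Hf_low (stackM_inj homega hb halpha.2).
have c_lattice c := hnf_lattice d_neq0 hN hU hH Hf_low c H_unit.
split=> // x.
rewrite (conductor_real_alpha_combP htau homega hb halpha hOF) zspan_alpha_comb.
split=> [[c [-> /c_lattice[e ->]]]|[e ->]]; first by exists e.
exists (d%:~R *: (Hinv *m ratmx e)); split=> //.
by apply/c_lattice; exists e.
Qed.
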